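(* Let $\mathbf{X}$ be a computably compact computable metric space. Then $\mathbf{X}$ is $'$-overt, i.e. the map $\operatorname{IsNonEmpty}:\mathcal{O}'(\mathbf{X})\to\mathbb{S}'$, $U\mapsto\top$ iff $U\neq\emptyset$, is computable.
   Context: A represented space is a pair $(X,\delta_X)$ with $\delta_X:\subseteq\mathbb{N}^\mathbb{N}\to X$ a partial surjection; maps are computable if they have a computable realizer on names. $\mathcal{C}(\mathbf{X},\mathbf{Y})$ is the represented space of continuous maps. A computable metric space carries its Cauchy representation. $\mathbb{S}=(\{\bot,\top\},\delta_\mathbb{S})$ with $\delta_\mathbb{S}(0^\mathbb{N})=\bot$, $\delta_\mathbb{S}(p)=\top$ otherwise; $\mathcal{O}(\mathbf{X})=\mathcal{C}(\mathbf{X},\mathbb{S})$ (open sets identified with characteristic functions). $\lim(p)(n)=\lim_{i\to\infty}p(\langle n,i\rangle)$, $\mathbb{S}'=(\{\bot,\top\},\delta_\mathbb{S}\circ\lim)$, $\mathcal{O}'(\mathbf{X})=\mathcal{C}(\mathbf{X},\mathbb{S}')$, elements identified with subsets of $X$. $\mathbf{X}$ is computably compact if $\operatorname{IsFull}:\mathcal{O}(\mathbf{X})\to\mathbb{S}$, $U\mapsto\top$ iff $U=X$, is computable. *)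

From Stdlib Require Import Reals List Arith ClassicalEpsilon.
Open Scope R_scope.

Inductive recf : Type :=
| RZero : recf
| RSucc : recf
| RProj : nat -> recf
| RComp : recf -> list recf -> recf
| RPrim : recf -> recf -> recf
| RMu   : recf -> recf.

Inductive ev : recf -> list nat -> nat -> Prop :=
| ev_zero : forall xs, ev RZero xs 0
| ev_succ : forall x xs, ev RSucc (x :: xs) (S x)
| ev_proj : forall i xs, ev (RProj i) xs (nth i xs 0%nat)
| ev_comp : forall f gs xs ys v, evs gs xs ys -> ev f ys v -> ev (RComp f gs) xs v
| ev_prim0 : forall f g xs v, ev f xs v -> ev (RPrim f g) (0%nat :: xs) v
| ev_primS : forall f g n xs w v,
    ev (RPrim f g) (n :: xs) w -> ev g (n :: w :: xs) v -> ev (RPrim f g) (S n :: xs) v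
| ev_mu : forall f xs y,
    ev f (y :: xs) 0%nat ->
    (forall z, (z < y)%nat -> exists w, ev f (z :: xs) w /\ w <> 0%nat) ->
    ev (RMu f) xs y
with evs : list recf -> list nat -> list nat -> Prop :=
| evs_nil : forall xs, evs nil xs nil
| evs_cons : forall g gs xs y ys, ev g xs y -> evs gs xs ys -> evs (g :: gs) xs (y :: ys).

Definition computable_nat (h : nat -> nat) : Prop :=
  exists e : recf, forall n, ev e (n :: nil) (h n).

Definition cpair (a b : nat) : nat := ((a + b) * S (a + b) / 2 + b)%nat.

Fixpoint code_list (l : list nat) : nat :=
  match l with nil => 0%nat | x :: l' => S (cpair x (code_list l')) end.

Definition prefix (q : nat -> nat) (k : nat) : list nat := map q (seq 0 k).

Definition assoc (h q r : nat -> nat) : Prop :=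
  forall n, exists k,
    h (cpair n (code_list (prefix q k))) = S (r n) /\
    forall j, (j < k)%nat -> h (cpair n (code_list (prefix q j))) = 0%nat.

(* delta is a partial map N^N -> carrier, given as its graph. *)
Record rep_space : Type := RepSpace {
  carrier :> Type;
  delta : (nat -> nat) -> carrier -> Prop
}.

Definition realizes {X Y : rep_space} (h : nat -> nat) (f : X -> Y) : Prop :=
  forall q x, delta X q x -> exists r, assoc h q r /\ delta Y r (f x).

Definition is_computable {X Y : rep_space} (f : X -> Y) : Prop :=
  exists h, computable_nat h /\ realizes h f.

Definition is_continuous {X Y : rep_space} (f : X -> Y) : Prop :=
  exists h, realizes h f.

Definition cont_map (X Y : rep_space) : Type := { f : X -> Y | is_continuous f }.

Definition Cspace (X Y : rep_space) : rep_space :=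
  RepSpace (cont_map X Y) (fun p f => realizes p (proj1_sig f)).

(* Sierpinski space S: false = bot, true = top; 0^N names bot, everything else top. *)
Definition Sierp : rep_space :=
  RepSpace bool (fun p b => b = true <-> exists n, p n <> 0%nat).

Definition is_lim (p r : nat -> nat) : Prop :=
  forall n, exists i0, forall i, (i0 <= i)%nat -> p (cpair n i) = r n.

Definition Sierp' : rep_space :=
  RepSpace bool (fun p b => exists r, is_lim p r /\ delta Sierp r b).

Definition Ospace (X : rep_space) : rep_space := Cspace X Sierp.
Definition Ospace' (X : rep_space) : rep_space := Cspace X Sierp'.

Definition bool_of (P : Prop) : bool :=
  if excluded_middle_informative P then true else false.

Definition IsFull (X : rep_space) (U : Ospace X) : Sierp :=
  bool_of (forall x : X, proj1_sig U x = true).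

Definition IsNonEmpty' (X : rep_space) (U : Ospace' X) : Sierp' :=
  bool_of (exists x : X, proj1_sig U x = true).

Definition computably_compact (X : rep_space) : Prop :=
  is_computable (IsFull X).

Definition prime_overt (X : rep_space) : Prop :=
  is_computable (IsNonEmpty' X).

Record cmetric_space : Type := CMetric {
  cm_pt :> Type;
  cm_dist : cm_pt -> cm_pt -> R;
  cm_dist_ge0 : forall x y, 0 <= cm_dist x y;
  cm_dist_eq0 : forall x y, cm_dist x y = 0 <-> x = y;
  cm_dist_sym : forall x y, cm_dist x y = cm_dist y x;
  cm_dist_tri : forall x y z, cm_dist x z <= cm_dist x y + cm_dist y z;
  cm_dense : nat -> cm_pt;
  cm_dense_prop : forall x eps, 0 < eps -> exists i, cm_dist x (cm_dense i) < eps;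
  (* the distances between dense points are uniformly computable reals:
     rational approximations (a - b)/(c + 1) with error <= 2^-n *)
  cm_dist_computable : exists ha hb hc : nat -> nat,
    computable_nat ha /\ computable_nat hb /\ computable_nat hc /\
    forall i j n,
      let m := cpair (cpair i j) n in
      Rabs ((INR (ha m) - INR (hb m)) / INR (S (hc m))
            - cm_dist (cm_dense i) (cm_dense j)) <= / 2 ^ n
}.

Definition cauchy_rep (M : cmetric_space) : rep_space :=
  RepSpace M (fun p x => forall n, cm_dist M (cm_dense M (p n)) x <= / 2 ^ n).

(* Computable compactness yields, by running the [IsFull] realizer on unions of
   basic balls, a computable bound [net_size r] on the size of a [2^-r]-net of dense
   points; it also makes the space complete.  A name of [U : O'(X)] applied to a name of
   [x] produces a sequence of limits, and [x \in U] iff for some [m] the values at the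
   indices [(m, i)] are eventually a fixed [c <> 0], say from [i = j] on.  For fixed
   [m, c, j] the finite paths through the nets that are Cauchy-consistent and along
   which the name of [U] never answers anything but [c] at [(m, i)], [i >= j], form a
   decidable finitely branching tree.  By König's lemma and completeness the tree is
   infinite iff some point of [U] has the data [m, c, j]; being infinite means having
   paths of every length, which is the limit of decidable tests and thus an [S']-value. *)

From Stdlib Require Import Reals.
From Stdlib Require Import List Arith Lia Lra ClassicalEpsilon Classical.
Import ListNotations.
Open Scope nat_scope.

(** * Mu-recursive functions of a fixed number of arguments *)

Definition recursive (k : nat) (f : list nat -> nat) : Prop :=
  exists e, forall xs, length xs = k -> ev e xs (f xs).

Definition recursive1 (F : nat -> nat) := recursive 1 (fun xs => F (nth 0 xs 0)).
Definition recursive2 (F : nat -> nat -> nat) :=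
  recursive 2 (fun xs => F (nth 0 xs 0) (nth 1 xs 0)).
Definition recursive3 (F : nat -> nat -> nat -> nat) :=
  recursive 3 (fun xs => F (nth 0 xs 0) (nth 1 xs 0) (nth 2 xs 0)).

Lemma recursive_ext k f g :
  recursive k f -> (forall xs, length xs = k -> f xs = g xs) -> recursive k g.
Proof. intros [e He] H; exists e; intros xs Hl; rewrite <- H by exact Hl; auto. Qed.

Lemma recursive_proj k i : i < k -> recursive k (fun xs => nth i xs 0).
Proof. intros _; exists (RProj i); intros; constructor. Qed.

Lemma recursive_zero k : recursive k (fun _ => 0).
Proof. exists RZero; intros; constructor. Qed.

Lemma recursive_comp k m f gs :
  recursive m f -> length gs = m -> Forall (fun g => recursive k g) gs ->
  recursive k (fun xs => f (map (fun g => g xs) gs)).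
Proof.
  intros [ef Hf] Hl HF.
  assert (Hgs : exists es, forall xs, length xs = k -> evs es xs (map (fun g => g xs) gs)).
  { clear Hl. induction HF as [|g gs [eg Hg] _ [es Hes]].
    - exists nil; intros; constructor.
    - exists (eg :: es); intros; simpl; constructor; auto. }
  destruct Hgs as [es Hes]. exists (RComp ef es); intros xs Hx.
  econstructor; [apply Hes; auto|]. apply Hf. rewrite length_map; auto.
Qed.

Fixpoint primrec (f0 g : list nat -> nat) (n : nat) (ps : list nat) : nat :=
  match n with 0 => f0 ps | S n' => g (n' :: primrec f0 g n' ps :: ps) end.

Lemma recursive_primrec k f0 g : recursive k f0 -> recursive (S (S k)) g ->
  recursive (S k) (fun xs => primrec f0 g (hd 0 xs) (tl xs)).
Proof.
  intros [ef Hf] [eg Hg]. exists (RPrim ef eg). intros [|n ps] Hl; [discriminate|].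
  simpl in Hl |- *. injection Hl as Hl.
  induction n; simpl.
  - constructor; auto.
  - econstructor; [exact IHn|]. apply Hg. simpl; lia.
Qed.

Lemma recursive_mu k f m : recursive (S k) f ->
  (forall ps, length ps = k ->
     f (m ps :: ps) = 0 /\ forall z, z < m ps -> f (z :: ps) <> 0) ->
  recursive k m.
Proof.
  intros [ef Hf] H. exists (RMu ef). intros ps Hl. destruct (H ps Hl) as [H1 H2].
  constructor.
  - rewrite <- H1. apply Hf; simpl; lia.
  - intros z Hz. exists (f (z :: ps)). split; auto. apply Hf; simpl; lia.
Qed.

Lemma recursive_app1 k F g : recursive1 F -> recursive k g -> recursive k (fun xs => F (g xs)).
Proof. intros HF Hg. exact (recursive_comp k 1 _ [g] HF eq_refl ltac:(auto)). Qed.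

Lemma recursive_app2 k F g1 g2 : recursive2 F -> recursive k g1 -> recursive k g2 ->
  recursive k (fun xs => F (g1 xs) (g2 xs)).
Proof. intros HF H1 H2. exact (recursive_comp k 2 _ [g1; g2] HF eq_refl ltac:(auto)). Qed.

Lemma recursive_app3 k F g1 g2 g3 :
  recursive3 F -> recursive k g1 -> recursive k g2 -> recursive k g3 ->
  recursive k (fun xs => F (g1 xs) (g2 xs) (g3 xs)).
Proof. intros HF H1 H2 H3. exact (recursive_comp k 3 _ [g1; g2; g3] HF eq_refl ltac:(auto)). Qed.

Lemma recursive_succ : recursive1 S.
Proof.
  exists (RComp RSucc [RProj 0]). intros xs _.
  econstructor; repeat constructor.
Qed.

Lemma recursive_const k c : recursive k (fun _ => c).
Proof.
  induction c; [apply recursive_zero|].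
  exact (recursive_app1 k S (fun _ => c) recursive_succ IHc).
Qed.

Lemma recursive1_primrec (F : nat -> nat) (a : nat) (G : nat -> nat -> nat) :
  F 0 = a -> (forall n, F (S n) = G n (F n)) -> recursive2 G -> recursive1 F.
Proof.
  intros H0 HS HG.
  eapply recursive_ext;
    [exact (recursive_primrec 0 (fun _ => a) _ (recursive_const 0 a) HG)|].
  intros [|n ps] Hl; [discriminate|]. simpl. clear Hl.
  induction n; simpl; [auto|]. rewrite HS, IHn. auto.
Qed.

Lemma recursive2_primrec (F : nat -> nat -> nat) (f0 : nat -> nat)
  (G : nat -> nat -> nat -> nat) :
  (forall m, F 0 m = f0 m) -> (forall n m, F (S n) m = G n (F n m) m) ->
  recursive1 f0 -> recursive3 G -> recursive2 F.
Proof.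
  intros H0 HS Hf HG.
  eapply recursive_ext; [exact (recursive_primrec 1 _ _ Hf HG)|].
  intros [|n ps] Hl; [discriminate|]. simpl. clear Hl.
  induction n; simpl; [auto|]. rewrite HS, IHn. auto.
Qed.

Create HintDb recursive.
#[export] Hint Resolve recursive_succ : recursive.

(* Decomposes an explicit term into projections, constants and applications of
   functions known to be recursive by a hypothesis or the [recursive] hint database. *)
Ltac recursive_arith := cbv beta; first
 [ apply recursive_proj; simpl; lia
 | match goal with |- recursive _ (fun _ => ?c) => apply recursive_const end
 | match goal with |- recursive ?k (fun xs => ?F (@?g1 xs) (@?g2 xs) (@?g3 xs)) =>
      apply (recursive_app3 k F g1 g2 g3);
      [solve [eauto with recursive]|recursive_arith|recursive_arith|recursive_arith] end
 | match goal with |- recursive ?k (fun xs => ?F (@?g1 xs) (@?g2 xs)) =>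
      apply (recursive_app2 k F g1 g2);
      [solve [eauto with recursive]|recursive_arith|recursive_arith] end
 | match goal with |- recursive ?k (fun xs => ?F (@?g1 xs)) =>
      apply (recursive_app1 k F g1); [solve [eauto with recursive]|recursive_arith] end ].
Ltac recursive_arith1 := unfold recursive1, recursive2, recursive3; recursive_arith.

Lemma recursive2_flip F : recursive2 F -> recursive2 (fun a b => F b a).
Proof. intros HF. unfold recursive2. recursive_arith. Qed.

Lemma recursive_add : recursive2 Nat.add.
Proof. apply (recursive2_primrec _ (fun m => m) (fun n r m => S r)); auto; recursive_arith1. Qed.
#[export] Hint Resolve recursive_add : recursive.

Lemma recursive_mul : recursive2 Nat.mul.
Proof. apply (recursive2_primrec _ (fun m => 0) (fun n r m => m + r)); auto; recursive_arith1. Qed.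

Lemma recursive_pred : recursive1 Nat.pred.
Proof. apply (recursive1_primrec _ 0 (fun n r => n)); auto; recursive_arith1. Qed.
#[export] Hint Resolve recursive_mul recursive_pred : recursive.

Lemma recursive_sub : recursive2 Nat.sub.
Proof.
  apply (recursive2_flip (fun b a => a - b)).
  apply (recursive2_primrec _ (fun a => a) (fun n r a => pred r)); intros; try lia; recursive_arith1.
Qed.

Lemma recursive_pow : recursive2 Nat.pow.
Proof.
  apply (recursive2_flip (fun e b => b ^ e)).
  apply (recursive2_primrec _ (fun b => 1) (fun n r b => b * r)); intros; simpl; try lia;
    recursive_arith1.
Qed.
#[export] Hint Resolve recursive_sub recursive_pow : recursive.

(* Boolean tests are coded by [0] (false) and non-zero values (true). *)

Definition isz (n : nat) := match n with 0 => 1 | _ => 0 end.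
Definition sg (n : nat) := match n with 0 => 0 | _ => 1 end.
Definition ite (c x y : nat) := match c with 0 => y | _ => x end.
Definition b2n (b : bool) := if b then 1 else 0.
Definition lebn a b := b2n (a <=? b).
Definition ltbn a b := b2n (a <? b).
Definition eqbn a b := b2n (a =? b).
Definition andn a b := sg a * sg b.
Definition orn a b := sg (a + b).

Lemma recursive_isz : recursive1 isz.
Proof. apply (recursive1_primrec _ 1 (fun n r => 0)); auto; recursive_arith1. Qed.

Lemma recursive_sg : recursive1 sg.
Proof. apply (recursive1_primrec _ 0 (fun n r => 1)); auto; recursive_arith1. Qed.
#[export] Hint Resolve recursive_isz recursive_sg : recursive.

Lemma recursive_ite : recursive3 ite.
Proof.
  eapply recursive_ext with
    (f := fun xs => sg (nth 0 xs 0) * nth 1 xs 0 + isz (nth 0 xs 0) * nth 2 xs 0).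
  - recursive_arith.
  - intros xs _. destruct (nth 0 xs 0); simpl; lia.
Qed.

Lemma recursive_lebn : recursive2 lebn.
Proof.
  eapply recursive_ext with (f := fun xs => isz (nth 0 xs 0 - nth 1 xs 0)).
  - recursive_arith.
  - intros xs _. unfold lebn.
    destruct (Nat.leb_spec (nth 0 xs 0) (nth 1 xs 0)).
    + replace (nth 0 xs 0 - nth 1 xs 0) with 0 by lia. auto.
    + destruct (nth 0 xs 0 - nth 1 xs 0) eqn:E; [lia|auto].
Qed.
#[export] Hint Resolve recursive_ite recursive_lebn : recursive.

Lemma recursive_ltbn : recursive2 ltbn.
Proof.
  eapply recursive_ext with (f := fun xs => lebn (S (nth 0 xs 0)) (nth 1 xs 0)).
  - recursive_arith.
  - reflexivity.
Qed.

Lemma recursive_eqbn : recursive2 eqbn.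
Proof.
  eapply recursive_ext with
    (f := fun xs => lebn (nth 0 xs 0) (nth 1 xs 0) * lebn (nth 1 xs 0) (nth 0 xs 0)).
  - recursive_arith.
  - intros xs _. unfold lebn, eqbn.
    destruct (Nat.eqb_spec (nth 0 xs 0) (nth 1 xs 0));
      destruct (Nat.leb_spec (nth 0 xs 0) (nth 1 xs 0));
      destruct (Nat.leb_spec (nth 1 xs 0) (nth 0 xs 0)); simpl; lia.
Qed.

Lemma recursive_andn : recursive2 andn. Proof. unfold andn; recursive_arith1. Qed.
Lemma recursive_orn : recursive2 orn. Proof. unfold orn; recursive_arith1. Qed.
#[export] Hint Resolve recursive_ltbn recursive_eqbn recursive_andn recursive_orn : recursive.

Lemma recursive_div2 : recursive1 Nat.div2.
Proof.
  set (oddn n := b2n (Nat.odd n)).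
  assert (Hodd : recursive1 oddn).
  { apply (recursive1_primrec _ 0 (fun n r => isz r)); auto; [|recursive_arith1].
    intros n. unfold oddn. rewrite Nat.odd_succ, <- Nat.negb_odd. destruct (Nat.odd n); auto. }
  apply (recursive1_primrec _ 0 (fun n r => r + oddn n)); auto; [|recursive_arith1].
  intros n. unfold oddn. pose proof (Nat.div2_odd n). pose proof (Nat.div2_odd (S n)).
  rewrite Nat.odd_succ, <- Nat.negb_odd in *. destruct (Nat.odd n); simpl in *; lia.
Qed.
#[export] Hint Resolve recursive_div2 : recursive.

Lemma recursive_cpair : recursive2 cpair.
Proof.
  eapply recursive_ext with (f := fun xs =>
    Nat.div2 ((nth 0 xs 0 + nth 1 xs 0) * S (nth 0 xs 0 + nth 1 xs 0)) + nth 1 xs 0).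
  - recursive_arith.
  - intros; unfold cpair; rewrite Nat.div2_div; auto.
Qed.
#[export] Hint Resolve recursive_cpair : recursive.

Lemma andn_neq0 a b : andn a b <> 0 <-> a <> 0 /\ b <> 0.
Proof. unfold andn, sg. destruct a, b; simpl; split; intros; try lia; tauto. Qed.

Lemma andn_eq0 a b : andn a b = 0 <-> a = 0 \/ b = 0.
Proof. unfold andn, sg. destruct a, b; simpl; split; intros; try lia; tauto. Qed.

Lemma isz_neq0 a : isz a <> 0 <-> a = 0.
Proof. destruct a; simpl; split; intros; lia. Qed.

Lemma isz_eq0 a : isz a = 0 <-> a <> 0.
Proof. destruct a; simpl; split; intros; lia. Qed.

Lemma sg_eq0 a : sg a = 0 <-> a = 0.
Proof. destruct a; simpl; split; intros; lia. Qed.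

Lemma lebn_neq0 a b : lebn a b <> 0 <-> a <= b.
Proof. unfold lebn. destruct (Nat.leb_spec a b); simpl; split; intros; lia. Qed.

Lemma ltbn_neq0 a b : ltbn a b <> 0 <-> a < b.
Proof. unfold ltbn. destruct (Nat.ltb_spec a b); simpl; split; intros; lia. Qed.

Lemma eqbn_neq0 a b : eqbn a b <> 0 <-> a = b.
Proof. unfold eqbn. destruct (Nat.eqb_spec a b); simpl; split; intros; lia. Qed.

Lemma b2n_neq0 b : b2n b <> 0 <-> b = true.
Proof. destruct b; simpl; split; intros; auto; congruence. Qed.

Lemma andn_le1 a b : andn a b <= 1.
Proof. unfold andn, sg. destruct a, b; simpl; lia. Qed.

Lemma map_nth_seq (l : list nat) : map (fun i => nth i l 0) (seq 0 (length l)) = l.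
Proof.
  apply nth_ext with (d := 0) (d' := 0); rewrite length_map, length_seq; auto.
  intros n Hn.
  rewrite <- (nth_nth_nth_map l 0 (seq 0 (length l)) (dn:=0))
    by (left; rewrite length_seq; auto).
  rewrite seq_nth by auto. auto.
Qed.

Lemma recursive_select k m f (sigma : nat -> nat) :
  recursive k f -> (forall i, i < k -> sigma i < m) ->
  recursive m (fun ys => f (map (fun i => nth (sigma i) ys 0) (seq 0 k))).
Proof.
  intros Hf Hs. eapply recursive_ext.
  - apply (recursive_comp m k f (map (fun i => fun ys => nth (sigma i) ys 0) (seq 0 k)) Hf).
    + rewrite length_map, length_seq; auto.
    + apply Forall_forall. intros g Hg. apply in_map_iff in Hg. destruct Hg as [i [<- Hi]].
      apply in_seq in Hi. apply recursive_proj. apply Hs; lia.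
  - intros ys _. cbv beta. rewrite map_map. auto.
Qed.

Lemma recursive_shift k f :
  recursive (S k) f -> recursive (S (S k)) (fun ys => f (hd 0 ys :: tl (tl ys))).
Proof.
  intros Hf. eapply recursive_ext.
  - apply (recursive_select (S k) (S (S k)) f
      (fun i => match i with 0 => 0 | S i => S (S i) end) Hf).
    intros [|i]; lia.
  - intros [|y [|y' ys]] Hl; try discriminate. simpl in Hl. injection Hl as Hl.
    simpl. rewrite <- seq_shift, map_map. rewrite <- Hl. rewrite map_nth_seq. reflexivity.
Qed.

Lemma recursive_cons k f g :
  recursive (S k) f -> recursive k g -> recursive k (fun ys => f (g ys :: ys)).
Proof.
  intros Hf Hg. eapply recursive_ext.
  - apply (recursive_comp k (S k) f (g :: map (fun i => fun ys => nth i ys 0) (seq 0 k)) Hf).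
    + simpl. rewrite length_map, length_seq; auto.
    + constructor; auto. apply Forall_forall. intros h Hh.
      apply in_map_iff in Hh. destruct Hh as [i [<- Hi]].
      apply in_seq in Hi. apply recursive_proj. lia.
  - intros ys Hl. simpl. rewrite map_map, <- Hl. rewrite map_nth_seq. reflexivity.
Qed.

Fixpoint bex (P : nat -> nat) (n : nat) : nat :=
  match n with 0 => 0 | S n' => orn (bex P n') (P n') end.
Fixpoint bsum (P : nat -> nat) (n : nat) : nat :=
  match n with 0 => 0 | S n' => bsum P n' + P n' end.

Lemma recursive_bex k P : recursive (S k) P ->
  recursive (S k) (fun xs => bex (fun i => P (i :: tl xs)) (hd 0 xs)).
Proof.
  intros HP.
  eapply recursive_ext;
    [apply (recursive_primrec k (fun _ => 0)
              (fun ys => orn (nth 1 ys 0) (P (hd 0 ys :: tl (tl ys)))) (recursive_zero k))|].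
  - apply (recursive_app2 _ orn); auto with recursive.
    + apply recursive_proj; lia.
    + apply recursive_shift; auto.
  - intros [|n ps] _; simpl; [auto|]. induction n; simpl; try rewrite IHn; auto.
Qed.

Lemma recursive_bsum k P : recursive (S k) P ->
  recursive (S k) (fun xs => bsum (fun i => P (i :: tl xs)) (hd 0 xs)).
Proof.
  intros HP.
  eapply recursive_ext;
    [apply (recursive_primrec k (fun _ => 0)
              (fun ys => nth 1 ys 0 + P (hd 0 ys :: tl (tl ys))) (recursive_zero k))|].
  - apply (recursive_app2 _ Nat.add); auto with recursive.
    + apply recursive_proj; lia.
    + apply recursive_shift; auto.
  - intros [|n ps] _; simpl; [auto|]. induction n; simpl; try rewrite IHn; auto.
Qed.

Lemma recursive_bex_bound k P g : recursive (S k) P -> recursive k g ->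
  recursive k (fun xs => bex (fun i => P (i :: xs)) (g xs)).
Proof. intros HP Hg. exact (recursive_cons k _ g (recursive_bex k P HP) Hg). Qed.

Lemma recursive_bsum_bound k P g : recursive (S k) P -> recursive k g ->
  recursive k (fun xs => bsum (fun i => P (i :: xs)) (g xs)).
Proof. intros HP Hg. exact (recursive_cons k _ g (recursive_bsum k P HP) Hg). Qed.

Lemma recursive_hd k f :
  recursive k (fun ys => nth 0 (f ys) 0) -> recursive k (fun ys => hd 0 (f ys)).
Proof. intros H; eapply recursive_ext; [exact H|]. intros ys _. cbv beta. destruct (f ys); auto. Qed.

Lemma recursive_nth_tl k j f :
  recursive k (fun ys => nth (S j) (f ys) 0) -> recursive k (fun ys => nth j (tl (f ys)) 0).
Proof.
  intros H; eapply recursive_ext; [exact H|].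
  intros ys _. cbv beta. destruct (f ys); simpl; auto. destruct j; auto.
Qed.

(* Extends [recursive_arith] with bounded quantifiers (whose bodies refer to the
   bound variable through [hd] and to outer variables through [tl]) and with
   boolean comparisons. *)
Ltac recursive_auto := cbv beta zeta; first
 [ apply recursive_proj; simpl; lia
 | match goal with |- recursive ?k (fun ys => hd 0 (@?f ys)) =>
     apply (recursive_hd k f); recursive_auto end
 | match goal with |- recursive ?k (fun ys => nth ?j (tl (@?f ys)) 0) =>
     apply (recursive_nth_tl k j f); recursive_auto end
 | match goal with |- recursive ?k (fun xs => bex (fun i => @?B i xs) (@?G xs)) =>
     apply (recursive_bex_bound k (fun ys => B (hd 0 ys) (tl ys)) G);
     [recursive_auto|recursive_auto] end
 | match goal with |- recursive ?k (fun xs => bsum (fun i => @?B i xs) (@?G xs)) =>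
     apply (recursive_bsum_bound k (fun ys => B (hd 0 ys) (tl ys)) G);
     [recursive_auto|recursive_auto] end
 | match goal with |- recursive _ (fun _ => ?c) => apply recursive_const end
 | match goal with |- recursive ?k (fun xs => b2n (Nat.ltb (@?a xs) (@?b xs))) =>
      apply (recursive_app2 k ltbn a b); [exact recursive_ltbn|recursive_auto|recursive_auto] end
 | match goal with |- recursive ?k (fun xs => b2n (Nat.leb (@?a xs) (@?b xs))) =>
      apply (recursive_app2 k lebn a b); [exact recursive_lebn|recursive_auto|recursive_auto] end
 | match goal with |- recursive ?k (fun xs => ?F (@?g1 xs) (@?g2 xs) (@?g3 xs)) =>
      apply (recursive_app3 k F g1 g2 g3);
      [solve [eauto with recursive]|recursive_auto|recursive_auto|recursive_auto] end
 | match goal with |- recursive ?k (fun xs => ?F (@?g1 xs) (@?g2 xs)) =>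
      apply (recursive_app2 k F g1 g2);
      [solve [eauto with recursive]|recursive_auto|recursive_auto] end
 | match goal with |- recursive ?k (fun xs => ?F (@?g1 xs)) =>
      apply (recursive_app1 k F g1); [solve [eauto with recursive]|recursive_auto] end ].
Ltac recursive_auto1 := unfold recursive1, recursive2, recursive3; recursive_auto.

Lemma bex_ext P P' n : (forall i, i < n -> P i = P' i) -> bex P n = bex P' n.
Proof. induction n; simpl; intros; auto. rewrite IHn, H; auto. Qed.

Lemma bsum_ext P P' n : (forall i, i < n -> P i = P' i) -> bsum P n = bsum P' n.
Proof. induction n; simpl; intros; auto. rewrite IHn, H; auto. Qed.

Lemma bex_spec P n : bex P n <> 0 <-> exists i, i < n /\ P i <> 0.
Proof.
  induction n as [|n IHn]; simpl.
  - split; [lia|intros [i [Hi _]]; lia].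
  - unfold orn. destruct (bex P n) eqn:E; destruct (P n) eqn:E2; simpl.
    + split; [lia|]. intros [i [Hi Hp]]. destruct (Nat.eq_dec i n); [subst; congruence|].
      assert (Hlt : exists i, i < n /\ P i <> 0) by (exists i; split; [lia|auto]).
      apply IHn in Hlt. lia.
    + split; [intros; exists n; split; [lia|congruence]|lia].
    + split; [|lia]. intros _. destruct IHn as [[i [? ?]] _]; [lia|].
      exists i; split; [lia|auto].
    + split; [intros; exists n; split; [lia|congruence]|lia].
Qed.

Lemma bex_eq0 P n : bex P n = 0 <-> forall i, i < n -> P i = 0.
Proof.
  split.
  - intros H i Hi. destruct (Nat.eq_dec (P i) 0); auto. exfalso.
    assert (bex P n <> 0) by (apply bex_spec; eauto). lia.
  - intros H. destruct (Nat.eq_dec (bex P n) 0) as [|Hn]; auto. apply bex_spec in Hn.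
    destruct Hn as [i [Hi Hp]]. apply H in Hi. lia.
Qed.

Lemma bsum_ge P n i : i < n -> P i <= bsum P n.
Proof.
  induction n; simpl; intros; [lia|].
  destruct (Nat.eq_dec i n); [subst; lia|]. specialize (IHn ltac:(lia)). lia.
Qed.

(** * Pairing and codes of lists *)

Definition triangle (s : nat) := s * S s / 2.

Lemma triangle_S s : triangle (S s) = triangle s + S s.
Proof.
  unfold triangle. replace (S s * S (S s)) with (s * S s + S s * 2) by lia.
  rewrite Nat.div_add; lia.
Qed.

Lemma triangle_mono s s' : s <= s' -> triangle s <= triangle s'.
Proof. induction 1; auto. rewrite triangle_S; lia. Qed.

Lemma cpair_triangle a b : cpair a b = triangle (a + b) + b.
Proof. reflexivity. Qed.

Lemma cpair_inj a b a' b' : cpair a b = cpair a' b' -> a = a' /\ b = b'.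
Proof.
  rewrite !cpair_triangle. intros H.
  assert (Hs : a + b = a' + b').
  { destruct (Nat.lt_trichotomy (a + b) (a' + b')) as [Hl|[Hl|Hl]]; auto.
    - assert (triangle (S (a + b)) <= triangle (a' + b')) by (apply triangle_mono; lia).
      rewrite triangle_S in *. lia.
    - assert (triangle (S (a' + b')) <= triangle (a + b)) by (apply triangle_mono; lia).
      rewrite triangle_S in *. lia. }
  rewrite Hs in H. lia.
Qed.

Lemma cpair_S0 b : cpair (S b) 0 = S (cpair 0 b).
Proof.
  rewrite !cpair_triangle. replace (S b + 0) with (S b) by lia.
  rewrite triangle_S. simpl. lia.
Qed.

Lemma cpair_SS a b : cpair a (S b) = S (cpair (S a) b).
Proof. rewrite !cpair_triangle. replace (a + S b) with (S a + b) by lia. lia. Qed.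

(* Walks the diagonals of the Cantor enumeration. *)
Fixpoint unpair (z : nat) : nat * nat :=
  match z with
  | 0 => (0, 0)
  | S z' => match unpair z' with (0, b) => (S b, 0) | (S a, b) => (a, S b) end
  end.

Lemma cpair_unpair z : cpair (fst (unpair z)) (snd (unpair z)) = z.
Proof.
  induction z; [reflexivity|]. simpl. destruct (unpair z) as [[|a] b]; simpl in *.
  - rewrite cpair_S0; auto.
  - rewrite cpair_SS; auto.
Qed.

Definition pfst z := fst (unpair z).
Definition psnd z := snd (unpair z).

Lemma cpair_eta z : cpair (pfst z) (psnd z) = z.
Proof. apply cpair_unpair. Qed.

Lemma cpair_fst a b : pfst (cpair a b) = a.
Proof. pose proof (cpair_eta (cpair a b)) as H. apply cpair_inj in H. tauto. Qed.

Lemma cpair_snd a b : psnd (cpair a b) = b.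
Proof. pose proof (cpair_eta (cpair a b)) as H. apply cpair_inj in H. tauto. Qed.

Lemma cpair_ge_r a b : b <= cpair a b.
Proof. rewrite cpair_triangle. lia. Qed.

Lemma cpair_mono a b a' b' : a <= a' -> b <= b' -> cpair a b <= cpair a' b'.
Proof.
  intros. rewrite !cpair_triangle.
  assert (triangle (a + b) <= triangle (a' + b')) by (apply triangle_mono; lia). lia.
Qed.

Lemma psnd_le z : psnd z <= z.
Proof. rewrite <- (cpair_eta z) at 2. apply cpair_ge_r. Qed.

Lemma recursive_pfst : recursive1 pfst.
Proof.
  apply (recursive_mu 1
    (fun xs => isz (bex (fun b => eqbn (cpair (nth 0 xs 0) b) (nth 1 xs 0)) (S (nth 1 xs 0))))).
  - recursive_auto.
  - intros ps _. cbn [nth]. set (z := nth 0 ps 0). split.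
    + assert (Hb : bex (fun b => eqbn (cpair (pfst z) b) z) (S z) <> 0).
      { apply bex_spec. exists (psnd z). split; [pose proof (psnd_le z); lia|].
        unfold eqbn. rewrite cpair_eta, Nat.eqb_refl. simpl; lia. }
      destruct (bex _ (S z)); simpl; [lia|auto].
    + intros a Ha Hz.
      assert (Hb : bex (fun b => eqbn (cpair a b) z) (S z) <> 0)
        by (intros E; rewrite E in Hz; discriminate).
      apply bex_spec in Hb. destruct Hb as [b [_ Hb]]. unfold eqbn in Hb.
      destruct (Nat.eqb_spec (cpair a b) z) as [e|]; [|simpl in Hb; lia].
      rewrite <- (cpair_eta z) in e. apply cpair_inj in e. lia.
Qed.
#[export] Hint Resolve recursive_pfst : recursive.

Lemma recursive_psnd : recursive1 psnd.
Proof.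
  apply (recursive_mu 1 (fun xs => isz (eqbn (cpair (pfst (nth 1 xs 0)) (nth 0 xs 0)) (nth 1 xs 0)))).
  - recursive_auto.
  - intros ps _. simpl. set (z := nth 0 ps 0). split.
    + unfold eqbn. rewrite cpair_eta, Nat.eqb_refl. auto.
    + intros b Hb. unfold eqbn. destruct (Nat.eqb_spec (cpair (pfst z) b) z) as [e|]; simpl; [|lia].
      rewrite <- (cpair_eta z) in e at 2. apply cpair_inj in e. lia.
Qed.
#[export] Hint Resolve recursive_psnd : recursive.

Lemma recursive1_mu (f : nat -> nat -> nat) (m : nat -> nat) : recursive2 f ->
  (forall z, f (m z) z = 0 /\ forall y, y < m z -> f y z <> 0) -> recursive1 m.
Proof. intros Hf Hm. apply (recursive_mu 1 _ _ Hf). intros ps _. apply Hm. Qed.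

Definition hd_c c := pfst (pred c).
Definition tl_c c := psnd (pred c).
Definition drop_c n c := Nat.iter n tl_c c.
Definition nth_c i c := hd_c (drop_c i c).
Definition len_c c := bsum (fun i => sg (drop_c i c)) c.

Lemma recursive_hd_c : recursive1 hd_c. Proof. unfold hd_c; recursive_arith1. Qed.
Lemma recursive_tl_c : recursive1 tl_c. Proof. unfold tl_c; recursive_arith1. Qed.
#[export] Hint Resolve recursive_hd_c recursive_tl_c : recursive.

Lemma recursive_drop_c : recursive2 drop_c.
Proof.
  apply (recursive2_primrec _ (fun c => c) (fun n r c => tl_c r)); auto; recursive_arith1.
Qed.
#[export] Hint Resolve recursive_drop_c : recursive.

Lemma recursive_nth_c : recursive2 nth_c. Proof. unfold nth_c. recursive_arith1. Qed.
Lemma recursive_len_c : recursive1 len_c. Proof. unfold len_c. recursive_auto1. Qed.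
#[export] Hint Resolve recursive_nth_c recursive_len_c : recursive.

Lemma hd_c_code x l : hd_c (code_list (x :: l)) = x.
Proof. apply cpair_fst. Qed.

Lemma tl_c_code x l : tl_c (code_list (x :: l)) = code_list l.
Proof. apply cpair_snd. Qed.

Lemma drop_c_code n l : drop_c n (code_list l) = code_list (skipn n l).
Proof.
  revert l; induction n as [|n IHn]; intros l; auto.
  unfold drop_c in *. rewrite Nat.iter_succ_r. destruct l as [|x l].
  - simpl. change (tl_c 0) with 0. specialize (IHn []). simpl in IHn.
    rewrite IHn. destruct n; auto.
  - rewrite tl_c_code. apply IHn.
Qed.

Lemma nth_c_code i l : nth_c i (code_list l) = nth i l 0.
Proof.
  unfold nth_c. rewrite drop_c_code. revert l; induction i; intros [|x l]; simpl; auto.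
  all: try apply hd_c_code; rewrite skipn_nil; auto.
Qed.

Lemma length_le_code l : length l <= code_list l.
Proof. induction l; simpl; auto. pose proof (cpair_ge_r a (code_list l)). lia. Qed.

Lemma bsum_ltb L c : L <= c -> bsum (fun i => b2n (i <? L)) c = L.
Proof.
  induction c; intros; simpl; [lia|].
  destruct (Nat.eq_dec L (S c)).
  - subst. rewrite bsum_ext with (P' := fun _ => 1)
      by (intros; destruct (Nat.ltb_spec i (S c)); auto; lia).
    assert (Hn : forall n, bsum (fun _ => 1) n = n) by (induction n; simpl; lia).
    rewrite Hn. destruct (Nat.ltb_spec c (S c)); simpl; lia.
  - rewrite IHc by lia. destruct (Nat.ltb_spec c L); simpl; lia.
Qed.

Lemma len_c_code l : len_c (code_list l) = length l.
Proof.
  unfold len_c. rewrite bsum_ext with (P' := fun i => b2n (i <? length l)).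
  - apply bsum_ltb, length_le_code.
  - intros i _. rewrite drop_c_code. destruct (Nat.ltb_spec i (length l)).
    + destruct (skipn i l) eqn:E; auto.
      apply (f_equal (@length nat)) in E. rewrite length_skipn in E. simpl in E. lia.
    + rewrite skipn_all2 by lia. auto.
Qed.

Lemma code_list_surj c : exists l, code_list l = c.
Proof.
  induction c as [c IH] using lt_wf_ind. destruct c; [exists []; auto|].
  destruct (IH (psnd c)) as [l Hl]; [pose proof (psnd_le c); lia|].
  exists (pfst c :: l). simpl. rewrite Hl, cpair_eta. auto.
Qed.

Lemma len_c_le c : len_c c <= c.
Proof. destruct (code_list_surj c) as [l <-]. rewrite len_c_code. apply length_le_code. Qed.

(* [tabulate_from_c g i (cpair n p)] codes [g (n - i) p; ...; g (n - 1) p]. *)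
Fixpoint tabulate_from_c (g : nat -> nat -> nat) (i q : nat) : nat :=
  match i with
  | 0 => 0
  | S i' => S (cpair (g (pfst q - S i') (psnd q)) (tabulate_from_c g i' q))
  end.
Definition tabulate_c g n p := tabulate_from_c g n (cpair n p).

Lemma recursive_tabulate_c g : recursive2 g -> recursive2 (tabulate_c g).
Proof.
  intros Hg.
  assert (recursive2 (tabulate_from_c g))
    by (apply (recursive2_primrec _ (fun _ => 0)
          (fun i r q => S (cpair (g (pfst q - S i) (psnd q)) r))); auto; recursive_arith1).
  unfold tabulate_c. recursive_arith1.
Qed.

Lemma tabulate_from_c_spec g n p i : i <= n ->
  tabulate_from_c g i (cpair n p) = code_list (map (fun x => g x p) (seq (n - i) i)).
Proof.
  induction i; intros; simpl; auto. rewrite IHi by lia. rewrite cpair_fst, cpair_snd.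
  replace (n - i) with (S (n - S i)) by lia. reflexivity.
Qed.

Lemma tabulate_c_spec g n p : tabulate_c g n p = code_list (map (fun x => g x p) (seq 0 n)).
Proof. unfold tabulate_c. rewrite tabulate_from_c_spec by lia. rewrite Nat.sub_diag. auto. Qed.

Lemma recursive_min : recursive2 Nat.min.
Proof.
  eapply recursive_ext with (f := fun xs => nth 0 xs 0 - (nth 0 xs 0 - nth 1 xs 0)).
  - recursive_arith.
  - intros; lia.
Qed.
#[export] Hint Resolve recursive_min : recursive.

Definition take_c k c := tabulate_c nth_c (Nat.min k (len_c c)) c.

Lemma recursive_take_c : recursive2 take_c.
Proof.
  pose proof (recursive_tabulate_c nth_c recursive_nth_c). unfold take_c. recursive_arith1.
Qed.
#[export] Hint Resolve recursive_take_c : recursive.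

Lemma take_c_code k l : take_c k (code_list l) = code_list (firstn k l).
Proof.
  unfold take_c. rewrite tabulate_c_spec, len_c_code. f_equal.
  rewrite <- (map_nth_seq (firstn k l)), length_firstn. apply map_ext_in.
  intros i Hi. apply in_seq in Hi. rewrite nth_c_code, nth_firstn.
  destruct (Nat.ltb_spec i k); auto; lia.
Qed.

Lemma code_list_firstn_le k l : code_list (firstn k l) <= code_list l.
Proof. revert k; induction l; intros [|k]; simpl; try lia. apply le_n_S, cpair_mono; auto. Qed.

(* The code of [L] copies of [M], which bounds the codes of all lists of length
   [L] with entries at most [M]. *)
Fixpoint repeat_c L M := match L with 0 => 0 | S L' => S (cpair M (repeat_c L' M)) end.

Lemma recursive_repeat_c : recursive2 repeat_c.
Proof.
  apply (recursive2_primrec _ (fun _ => 0) (fun n r M => S (cpair M r))); auto; recursive_arith1.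
Qed.
#[export] Hint Resolve recursive_repeat_c : recursive.

Lemma code_list_le_repeat_c M l :
  (forall x, In x l -> x <= M) -> code_list l <= repeat_c (length l) M.
Proof. induction l; simpl; intros; auto. apply le_n_S, cpair_mono; auto. Qed.

Lemma bool_of_true (P : Prop) : bool_of P = true <-> P.
Proof. unfold bool_of. destruct (excluded_middle_informative P); split; auto; discriminate. Qed.

Lemma prefix_length q k : length (prefix q k) = k.
Proof. unfold prefix. rewrite length_map, length_seq. auto. Qed.

Lemma prefix_nth q k l : l < k -> nth l (prefix q k) 0 = q l.
Proof.
  intros. unfold prefix.
  rewrite nth_indep with (d' := q 0) by (rewrite length_map, length_seq; auto).
  rewrite map_nth, seq_nth; auto.
Qed.

Lemma prefix_ext q q' k : (forall i, i < k -> q i = q' i) -> prefix q k = prefix q' k.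
Proof. intros H. unfold prefix. apply map_ext_in. intros i Hi. apply in_seq in Hi. apply H; lia. Qed.

Lemma firstn_prefix q k j : j <= k -> firstn j (prefix q k) = prefix q j.
Proof.
  intros. unfold prefix. rewrite firstn_map. f_equal.
  replace k with (j + (k - j)) by lia.
  rewrite seq_app, firstn_app, length_seq, Nat.sub_diag, firstn_O, app_nil_r.
  apply firstn_all2. rewrite length_seq; lia.
Qed.

Lemma assoc_unique (h q r : nat -> nat) n k v :
  assoc h q r -> h (cpair n (code_list (prefix q k))) = S v ->
  (forall k', k' < k -> h (cpair n (code_list (prefix q k'))) = 0) -> r n = v.
Proof.
  intros Ha Hk Hmin. destruct (Ha n) as [k0 [H1 H2]].
  destruct (Nat.lt_trichotomy k0 k) as [Hl|[Hl|Hl]].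
  - apply Hmin in Hl. congruence.
  - subst. congruence.
  - apply H2 in Hl. congruence.
Qed.

Lemma is_lim_unique (s r : nat -> nat) m : is_lim s r ->
  forall j c, (forall i, j <= i -> s (cpair m i) = c) -> r m = c.
Proof.
  intros Hl j c Hc. destruct (Hl m) as [i0 Hi0].
  rewrite <- (Hi0 (i0 + j)) by lia. apply Hc; lia.
Qed.

(** * Finite subcovers from computable compactness *)

Section FiniteSubcover.
Variable X : rep_space.
Variable B : nat -> X -> Prop.
Variable cert : nat -> nat -> nat -> bool.
Hypothesis cert_sound : forall q x, delta X q x ->
  forall i l, cert (q l) i l = true -> B i x.
Hypothesis cert_complete : forall q x, delta X q x ->
  forall i, B i x -> exists l, cert (q l) i l = true.

Definition union_open (Nf : nat -> nat) (x : X) : Sierp :=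
  bool_of (exists i, (exists L, i < Nf L) /\ B i x).

(* Queried at [cpair n w], where [w] codes the prefix of length [n + 1] of a name [q],
   answers whether some entry [q l] certifies [x \in B i] with [i < Nf (n + 1)]. *)
Definition union_name (Nf : nat -> nat) (idx : nat) : nat :=
  let n := pfst idx in let w := psnd idx in
  ite (eqbn (len_c w) (S n))
    (S (bex (fun i => bex (fun l => b2n (cert (nth_c l w) i l)) (len_c w)) (Nf (len_c w))))
    0.

Lemma union_name_realizes Nf :
  (forall a b, a <= b -> Nf a <= Nf b) -> realizes (union_name Nf) (union_open Nf).
Proof.
  intros Hm q x Hq.
  exists (fun n => bex (fun i => bex (fun l => b2n (cert (q l) i l)) (S n)) (Nf (S n))).
  split.
  - intros n. exists (S n). unfold union_name.
    rewrite cpair_fst, cpair_snd, len_c_code, prefix_length. unfold eqbn. split.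
    + rewrite Nat.eqb_refl. cbn [b2n ite]. f_equal.
      apply bex_ext; intros i _. apply bex_ext; intros l Hl.
      rewrite nth_c_code, prefix_nth; auto.
    + intros j Hj. rewrite cpair_fst, cpair_snd, len_c_code, prefix_length.
      destruct (Nat.eqb_spec j (S n)); [lia|reflexivity].
  - cbn [delta Sierp]. unfold union_open. rewrite bool_of_true. split.
    + intros [i [[L HL] HB]]. destruct (cert_complete q x Hq i HB) as [l Hl].
      exists (L + l). apply bex_spec. exists i. split.
      * eapply Nat.lt_le_trans; [exact HL|]. apply Hm; lia.
      * apply bex_spec. exists l. split; [lia|]. rewrite Hl; simpl; lia.
    + intros [n Hn]. apply bex_spec in Hn. destruct Hn as [i [Hi Hn]].
      apply bex_spec in Hn. destruct Hn as [l [Hl Hc]].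
      exists i. split; [eauto|]. apply (cert_sound q x Hq i l).
      destruct (cert (q l) i l); auto.
Qed.

Definition union_open_map Nf (Hm : forall a b, a <= b -> Nf a <= Nf b) : Ospace X :=
  exist _ (union_open Nf) (ex_intro _ (union_name Nf) (union_name_realizes Nf Hm)).

Lemma union_name_min N idx : idx < N -> union_name (Nat.min N) idx = union_name (fun l => l) idx.
Proof.
  intros H. unfold union_name. pose proof (len_c_le (psnd idx)). pose proof (psnd_le idx).
  rewrite Nat.min_r by lia. auto.
Qed.

Variable hF : nat -> nat.
Hypothesis HF : realizes hF (IsFull X).

(* The run of [hF] on the union of [B 0], ..., [B (N - 1)] answers [top] at
   output index [n0] after reading [k] queries. *)
Definition subcover_found (N n0 k : nat) : Prop :=
  2 <= hF (cpair n0 (code_list (prefix (union_name (Nat.min N)) k))) /\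
  forall k', k' < k -> hF (cpair n0 (code_list (prefix (union_name (Nat.min N)) k'))) = 0.

Lemma subcover_found_exists : (forall x, exists i, B i x) -> exists N n0 k, subcover_found N n0 k.
Proof.
  intros Hall.
  destruct (HF (union_name (fun l => l)) (union_open_map _ (fun a b H => H))) as [r [Hr HU]].
  { apply union_name_realizes. auto. }
  assert (Hfull : IsFull X (union_open_map _ (fun a b H => H)) = true).
  { unfold IsFull. apply bool_of_true. intros x. simpl. unfold union_open. apply bool_of_true.
    destruct (Hall x) as [i Hi]. exists i. split; [exists (S i); lia|auto]. }
  apply HU in Hfull. destruct Hfull as [n0 Hn0]. destruct (Hr n0) as [k [Hk1 Hk2]].
  exists k, n0, k.
  split.
  - rewrite (prefix_ext _ (union_name (fun l => l))) by (intros; apply union_name_min; auto).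
    lia.
  - intros k' Hk'. rewrite (prefix_ext _ (union_name (fun l => l)))
      by (intros; apply union_name_min; lia). auto.
Qed.

Lemma subcover_found_covers N n0 k : subcover_found N n0 k -> forall x, exists i, i < N /\ B i x.
Proof.
  intros [H1 H2].
  set (Hm := fun a b H => Nat.min_le_compat_l a b N H).
  destruct (HF (union_name (Nat.min N)) (union_open_map _ Hm)) as [r [Hr HU]].
  { apply union_name_realizes. exact Hm. }
  destruct (hF (cpair n0 (code_list (prefix (union_name (Nat.min N)) k)))) as [|v] eqn:E;
    [lia|].
  pose proof (assoc_unique _ _ _ n0 k v Hr E H2) as Hrv.
  assert (Hfull : IsFull X (union_open_map _ Hm) = true) by (apply HU; exists n0; lia).
  unfold IsFull in Hfull. rewrite bool_of_true in Hfull.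
  intros x. specialize (Hfull x). simpl in Hfull. unfold union_open in Hfull.
  rewrite bool_of_true in Hfull. destruct Hfull as [i [[L HL] HB]].
  exists i. split; auto. lia.
Qed.
End FiniteSubcover.

Open Scope R_scope.

Lemma INR_pow2 k : INR (2 ^ k) = 2 ^ k.
Proof. rewrite pow_INR. reflexivity. Qed.

Lemma pow2_pos k : 0 < 2 ^ k.
Proof. apply pow_lt. lra. Qed.

Lemma inv_pow2_pos k : 0 < / 2 ^ k.
Proof. apply Rinv_0_lt_compat, pow2_pos. Qed.

Lemma inv_pow2_S k : / 2 ^ S k = / 2 ^ k / 2.
Proof. simpl. rewrite Rinv_mult. lra. Qed.

Lemma inv_pow2_add a b : / 2 ^ (a + b) = / 2 ^ a * / 2 ^ b.
Proof. rewrite pow_add, Rinv_mult. auto. Qed.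

Lemma inv_pow2_le a b : (a <= b)%nat -> / 2 ^ b <= / 2 ^ a.
Proof.
  intros H. apply Rinv_le_contravar; [apply pow2_pos|].
  apply Rle_pow; [lra|exact H].
Qed.

Lemma inv_pow2_lt eps : 0 < eps -> exists n, / 2 ^ n < eps.
Proof.
  intros He. destruct (pow_lt_1_zero (/ 2) ltac:(rewrite Rabs_pos_eq; lra) eps He) as [N HN].
  exists N. specialize (HN N (le_n _)).
  rewrite pow_inv, Rabs_pos_eq in HN; auto. left; apply inv_pow2_pos.
Qed.

Lemma rat_add_lt_inv_pow2 A B C l r :
  (INR A - INR B) / INR (S C) + 2 * / 2 ^ l < / 2 ^ r <->
  (A * 2 ^ (l + r) + 2 ^ (r + 1) * S C < S C * 2 ^ l + B * 2 ^ (l + r))%nat.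
Proof.
  assert (HD : 0 < INR (S C)) by (apply lt_0_INR; lia).
  pose proof (pow2_pos l) as Hl. pose proof (pow2_pos r) as Hr.
  assert (Hpos : 0 < INR (S C) * 2 ^ l * 2 ^ r) by (repeat apply Rmult_lt_0_compat; lra).
  assert (E1 : ((INR A - INR B) / INR (S C) + 2 * / 2 ^ l) * (INR (S C) * 2 ^ l * 2 ^ r)
               = (INR A - INR B) * 2 ^ l * 2 ^ r + 2 * INR (S C) * 2 ^ r) by (field; lra).
  assert (E2 : / 2 ^ r * (INR (S C) * 2 ^ l * 2 ^ r) = INR (S C) * 2 ^ l) by (field; lra).
  split; intros H.
  - apply INR_lt. rewrite !plus_INR, !mult_INR, !INR_pow2, !pow_add. simpl (2 ^ 1).
    apply (Rmult_lt_compat_r _ _ _ Hpos) in H. lra.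
  - apply lt_INR in H. rewrite !plus_INR, !mult_INR, !INR_pow2, !pow_add in H.
    simpl (2 ^ 1) in H. apply (Rmult_lt_reg_r _ _ _ Hpos). lra.
Qed.

Lemma rat_le_inv_pow2 A B C k :
  (INR A - INR B) / INR (S C) <= 7 * / 2 ^ k <-> (A * 2 ^ k <= 7 * S C + B * 2 ^ k)%nat.
Proof.
  assert (HD : 0 < INR (S C)) by (apply lt_0_INR; lia).
  pose proof (pow2_pos k) as Hk.
  assert (Hpos : 0 < INR (S C) * 2 ^ k) by (apply Rmult_lt_0_compat; lra).
  assert (E1 : (INR A - INR B) / INR (S C) * (INR (S C) * 2 ^ k) = (INR A - INR B) * 2 ^ k)
    by (field; lra).
  assert (E2 : 7 * / 2 ^ k * (INR (S C) * 2 ^ k) = 7 * INR (S C)) by (field; lra).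
  split; intros H.
  - apply INR_le. rewrite !plus_INR, !mult_INR, !INR_pow2.
    apply (Rmult_le_compat_r _ _ _ (Rlt_le _ _ Hpos)) in H. simpl (INR 7). lra.
  - apply le_INR in H. rewrite !plus_INR, !mult_INR, !INR_pow2 in H.
    apply (Rmult_le_reg_r _ _ _ Hpos). simpl (INR 7) in H. lra.
Qed.

Section Metric.
Variable M : cmetric_space.
Variables ha hb hc : nat -> nat.
Hypothesis Happ : forall i j n, let m := cpair (cpair i j) n in
  Rabs ((INR (ha m) - INR (hb m)) / INR (S (hc m)) - cm_dist M (cm_dense M i) (cm_dense M j))
  <= / 2 ^ n.

Local Notation d := (cm_dense M).
Local Notation dist := (cm_dist M).

Definition approx_dist i j n :=
  let m := cpair (cpair i j) n in (INR (ha m) - INR (hb m)) / INR (S (hc m)).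

Lemma approx_dist_bounds i j n :
  dist (d i) (d j) - / 2 ^ n <= approx_dist i j n <= dist (d i) (d j) + / 2 ^ n.
Proof.
  pose proof (Happ i j n) as H. unfold approx_dist.
  pose proof (Rle_abs (approx_dist i j n - dist (d i) (d j))).
  pose proof (Rle_abs (- (approx_dist i j n - dist (d i) (d j)))).
  rewrite Rabs_Ropp in *. unfold approx_dist in *. lra.
Qed.

Definition in_ball (r i : nat) (x : cauchy_rep M) : Prop := dist (d i) x < / 2 ^ r.

(* [ball_cert r a i l] holds when [d a] is a [2^-l]-approximation of [x] certifying
   [in_ball r i x]. *)
Definition ball_cert (r a i l : nat) : bool :=
  let m := cpair (cpair a i) l in
  (ha m * 2 ^ (l + r) + 2 ^ (r + 1) * S (hc m) <? S (hc m) * 2 ^ l + hb m * 2 ^ (l + r))%nat.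

Lemma ball_cert_iff r a i l :
  ball_cert r a i l = true <-> approx_dist a i l + 2 * / 2 ^ l < / 2 ^ r.
Proof. unfold ball_cert, approx_dist. rewrite Nat.ltb_lt. symmetry. apply rat_add_lt_inv_pow2. Qed.

Lemma ball_cert_sound r q (x : cauchy_rep M) : delta (cauchy_rep M) q x ->
  forall i l, ball_cert r (q l) i l = true -> in_ball r i x.
Proof.
  intros Hq i l Hc. apply ball_cert_iff in Hc. cbn in Hq. unfold in_ball.
  pose proof (Hq l). pose proof (approx_dist_bounds (q l) i l).
  pose proof (cm_dist_tri M (d i) (d (q l)) x). pose proof (cm_dist_sym M (d i) (d (q l))). lra.
Qed.

Lemma ball_cert_complete r q (x : cauchy_rep M) : delta (cauchy_rep M) q x ->
  forall i, in_ball r i x -> exists l, ball_cert r (q l) i l = true.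
Proof.
  intros Hq i Hs. cbn in Hq. unfold in_ball in Hs.
  destruct (inv_pow2_lt ((/ 2 ^ r - dist (d i) x) / 4)) as [l Hl]; [lra|].
  exists l. apply ball_cert_iff. pose proof (Hq l). pose proof (approx_dist_bounds (q l) i l).
  pose proof (cm_dist_tri M (d (q l)) x (d i)). pose proof (cm_dist_sym M x (d i)). lra.
Qed.

Lemma in_ball_cover r (x : cauchy_rep M) : exists i, in_ball r i x.
Proof.
  destruct (cm_dense_prop M x (/ 2 ^ r) (inv_pow2_pos r)) as [i Hi].
  exists i. unfold in_ball. rewrite cm_dist_sym. auto.
Qed.

(* Accepts whenever the distance is below [6 * 2^-(l+4)], and only if it is at most
   [2^-(l+1)], the step of a fast Cauchy sequence; the gap absorbs the error of the
   approximation at precision [l + 4]. *)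
Definition close_cert (a b l : nat) : bool :=
  let m := cpair (cpair a b) (l + 4) in
  (ha m * 2 ^ (l + 4) <=? 7 * S (hc m) + hb m * 2 ^ (l + 4))%nat.

Lemma close_cert_iff a b l :
  close_cert a b l = true <-> approx_dist a b (l + 4) <= 7 * / 2 ^ (l + 4).
Proof. unfold close_cert, approx_dist. rewrite Nat.leb_le. symmetry. apply rat_le_inv_pow2. Qed.

Lemma close_cert_sound a b l : close_cert a b l = true -> dist (d a) (d b) <= / 2 ^ S l.
Proof.
  intros H. apply close_cert_iff in H. pose proof (approx_dist_bounds a b (l + 4)).
  assert (/ 2 ^ (l + 4) = / 2 ^ S l / 8).
  { replace (l + 4)%nat with (S l + 3)%nat by lia. rewrite inv_pow2_add. simpl. lra. }
  pose proof (inv_pow2_pos (S l)). lra.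
Qed.

Lemma close_cert_complete a b l : dist (d a) (d b) < 6 * / 2 ^ (l + 4) -> close_cert a b l = true.
Proof. intros H. apply close_cert_iff. pose proof (approx_dist_bounds a b (l + 4)). lra. Qed.

Lemma close_cert_of_balls a b (x : cauchy_rep M) l :
  in_ball (l + 2) a x -> in_ball (S l + 2) b x -> close_cert a b l = true.
Proof.
  unfold in_ball. intros Ha Hb. apply close_cert_complete.
  pose proof (cm_dist_tri M (d a) x (d b)). pose proof (cm_dist_sym M x (d b)).
  assert (/ 2 ^ (l + 2) = 4 * / 2 ^ (l + 4)).
  { replace (l + 4)%nat with (l + 2 + 2)%nat by lia. rewrite (inv_pow2_add (l + 2) 2).
    replace (2 ^ 2) with 4 by (simpl; lra). field. apply pow_nonzero. lra. }
  assert (/ 2 ^ (S l + 2) = 2 * / 2 ^ (l + 4)).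
  { replace (l + 4)%nat with (S l + 2 + 1)%nat by lia. rewrite (inv_pow2_add (S l + 2) 1).
    replace (2 ^ 1) with 2 by (simpl; lra). field. apply pow_nonzero. lra. }
  lra.
Qed.

Variable hF : nat -> nat.
Hypothesis HF : realizes hF (IsFull (cauchy_rep M)).

Lemma fast_cauchy_dist (e : nat -> nat) :
  (forall n, dist (d (e n)) (d (e (S n))) <= / 2 ^ S n) ->
  forall n k, dist (d (e n)) (d (e (n + k)%nat)) <= / 2 ^ n - / 2 ^ (n + k).
Proof.
  intros He n k. induction k as [|k IHk].
  - rewrite Nat.add_0_r. rewrite (proj2 (cm_dist_eq0 M _ _) eq_refl). lra.
  - pose proof (cm_dist_tri M (d (e n)) (d (e (n + k)%nat)) (d (e (n + S k)%nat))).
    replace (n + S k)%nat with (S (n + k)) in * by lia. pose proof (He (n + k)%nat).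
    rewrite inv_pow2_S in *. lra.
Qed.

Definition far_from (e : nat -> nat) (n : nat) (x : cauchy_rep M) : Prop :=
  / 2 ^ n < dist (d (e n)) x.

(* Only used classically, hence defined with [bool_of]. *)
Definition far_cert (e : nat -> nat) (a n l : nat) : bool :=
  bool_of (/ 2 ^ n + 2 * / 2 ^ l < approx_dist a (e n) l).

Lemma far_cert_sound e q (x : cauchy_rep M) : delta (cauchy_rep M) q x ->
  forall i l, far_cert e (q l) i l = true -> far_from e i x.
Proof.
  intros Hq i l Hc. unfold far_cert in Hc. rewrite bool_of_true in Hc. cbn in Hq.
  unfold far_from. pose proof (Hq l). pose proof (approx_dist_bounds (q l) (e i) l).
  pose proof (cm_dist_tri M (d (q l)) x (d (e i))). pose proof (cm_dist_sym M x (d (e i))).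
  lra.
Qed.

Lemma far_cert_complete e q (x : cauchy_rep M) : delta (cauchy_rep M) q x ->
  forall i, far_from e i x -> exists l, far_cert e (q l) i l = true.
Proof.
  intros Hq i Hs. cbn in Hq. unfold far_from in Hs.
  destruct (inv_pow2_lt ((dist (d (e i)) x - / 2 ^ i) / 4)) as [l Hl]; [lra|].
  exists l. unfold far_cert. apply bool_of_true.
  pose proof (Hq l). pose proof (approx_dist_bounds (q l) (e i) l).
  pose proof (cm_dist_tri M (d (e i)) (d (q l)) x). pose proof (cm_dist_sym M (d (e i)) (d (q l))).
  lra.
Qed.

(* Compact spaces are complete: otherwise the sets [far_from e n] cover the space,
   and a finite subcover by the sets with [n < N] misses [d (e N)]. *)
Lemma fast_cauchy_limit (e : nat -> nat) :
  (forall n, dist (d (e n)) (d (e (S n))) <= / 2 ^ S n) ->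
  exists x : cauchy_rep M, forall n, dist (d (e n)) x <= / 2 ^ n.
Proof.
  intros He. apply NNPP. intros Hno.
  assert (Hall : forall x : cauchy_rep M, exists i, far_from e i x).
  { intros x. apply NNPP; intros Hx. apply Hno. exists x. intros n. apply Rnot_lt_le.
    intros Hl. apply Hx. exists n. exact Hl. }
  destruct (subcover_found_exists _ _ _ (far_cert_sound e) (far_cert_complete e) hF HF Hall)
    as [N [n0 [k Hs]]].
  destruct (subcover_found_covers _ _ _ (far_cert_sound e) (far_cert_complete e) hF HF
    N n0 k Hs (d (e N))) as [i [Hi Hf]].
  unfold far_from in Hf. pose proof (fast_cauchy_dist e He i (N - i)).
  replace (i + (N - i))%nat with N in * by lia. pose proof (inv_pow2_pos N). lra.
Qed.

End Metric.
Close Scope R_scope.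

(** * König's lemma *)

Section Koenig.
Variable G : list nat -> Prop.
Variable bound : nat -> nat.
Hypothesis G_firstn : forall w k, G w -> G (firstn k w).
Hypothesis G_bounded : forall w l, G w -> l < length w -> nth l w 0 < bound l.
Hypothesis G_deep : forall L, exists w, length w = L /\ G w.

Definition extendable (w : list nat) : Prop :=
  forall L, length w <= L -> exists w', length w' = L /\ G w' /\ firstn (length w) w' = w.

Lemma finite_choice_bound (P : nat -> nat -> Prop) n :
  (forall a, a < n -> exists L, P a L) ->
  exists Ls, forall a, a < n -> exists L, L <= Ls /\ P a L.
Proof.
  induction n as [|n IHn]; intros H; [exists 0; intros; lia|].
  destruct IHn as [Ls HLs]; [intros; apply H; lia|].
  destruct (H n (le_n _)) as [Ln Hn].
  exists (Ls + Ln). intros a Ha. destruct (Nat.eq_dec a n).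
  - subst. exists Ln; split; [lia|auto].
  - destruct (HLs a) as [L [HL HP]]; [lia|]. exists L; split; [lia|auto].
Qed.

Lemma firstn_S_nth (l : list nat) n : n < length l -> firstn (S n) l = firstn n l ++ [nth n l 0].
Proof.
  revert n; induction l; intros n H; simpl in *; [lia|].
  destruct n; simpl; auto. rewrite IHl by lia. auto.
Qed.

(* Finitely many children, each with a bounded depth of extensions, would bound the
   depth of extensions of the parent. *)
Lemma extendable_step w : extendable w -> exists a, extendable (w ++ [a]).
Proof.
  intros Hw. apply NNPP. intros Hno.
  assert (Hall : forall a, a < bound (length w) -> exists L, length w + 1 <= L /\
    ~ exists w', length w' = L /\ G w' /\ firstn (length (w ++ [a])) w' = w ++ [a]).
  { intros a Ha. apply NNPP. intros Hn. apply Hno. exists a. intros L HL.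
    apply NNPP. intros Hn2. apply Hn. exists L. rewrite length_app in HL. simpl in HL.
    split; auto. }
  destruct (finite_choice_bound _ _ Hall) as [Ls HLs].
  destruct (Hw (length w + 1 + Ls)) as [w' [Hl [HG Hpre]]]; [lia|].
  set (a := nth (length w) w' 0).
  destruct (HLs a) as [L [HLle [HL Hnot]]]; [apply G_bounded; auto; lia|].
  apply Hnot. exists (firstn L w'). split; [rewrite length_firstn; lia|].
  split; [apply G_firstn; auto|].
  rewrite length_app, firstn_firstn. simpl.
  replace (Nat.min (length w + 1) L) with (S (length w)) by lia.
  rewrite firstn_S_nth by lia. rewrite Hpre. auto.
Qed.

Lemma koenig : exists q : nat -> nat, forall L, G (prefix q L).
Proof.
  assert (Hc : forall w, exists a, extendable w -> extendable (w ++ [a])).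
  { intros w. destruct (classic (extendable w)) as [H|H].
    - destruct (extendable_step w H) as [a Ha]. exists a; auto.
    - exists 0; tauto. }
  destruct (choice _ Hc) as [next Hnext].
  set (pw := fix pw n := match n with 0 => [] | S n => pw n ++ [next (pw n)] end).
  assert (Hext : forall n, extendable (pw n)).
  { induction n; simpl; auto. intros L _. destruct (G_deep L) as [w [Hl HG]]. exists w; auto. }
  assert (Hlen : forall n, length (pw n) = n)
    by (induction n; simpl; auto; rewrite length_app; simpl; lia).
  exists (fun i => next (pw i)). intros L.
  assert (Hpw : prefix (fun i => next (pw i)) L = pw L).
  { induction L; auto. unfold prefix in *. rewrite seq_S, map_app, IHL. auto. }
  rewrite Hpw. destruct (Hext L L) as [w' [H1 [H2 H3]]]; [rewrite Hlen; auto|].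
  rewrite Hlen, firstn_all2 in H3 by lia. rewrite <- H3. auto.
Qed.
End Koenig.

(** * The realizer of IsNonEmpty' *)

Lemma least_exists (P : nat -> Prop) :
  (exists n, P n) -> exists n, P n /\ forall m, m < n -> ~ P m.
Proof.
  intros [n Hn]. induction n as [n IH] using lt_wf_ind.
  destruct (classic (exists m, m < n /\ P m)) as [[m [Hm HPm]]|Hno].
  - apply (IH m Hm HPm).
  - exists n. split; auto. intros m Hm HPm. apply Hno. eauto.
Qed.

Definition least (P : nat -> Prop) : nat :=
  match excluded_middle_informative (exists n, P n) with
  | left H => proj1_sig (constructive_indefinite_description _ (least_exists P H))
  | right _ => 0
  end.

Lemma least_spec P : (exists n, P n) -> P (least P) /\ forall m, m < least P -> ~ P m.
Proof.
  intros H. unfold least. destruct (excluded_middle_informative (exists n, P n)); [|tauto].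
  destruct (constructive_indefinite_description _ _) as [x Hx]. simpl. auto.
Qed.

Section Realizer.
Variable M : cmetric_space.
Variables ha hb hc hF : nat -> nat.
Hypothesis ha_rec : recursive1 ha.
Hypothesis hb_rec : recursive1 hb.
Hypothesis hc_rec : recursive1 hc.
Hypothesis hF_rec : recursive1 hF.
Hypothesis Happ : forall i j n, let m := cpair (cpair i j) n in
  (Rabs ((INR (ha m) - INR (hb m)) / INR (S (hc m)) - cm_dist M (cm_dense M i) (cm_dense M j))
   <= / 2 ^ n)%R.
Hypothesis HF : realizes hF (IsFull (cauchy_rep M)).
Local Hint Resolve ha_rec hb_rec hc_rec hF_rec : recursive.

Local Notation d := (cm_dense M).

Definition ball_union_name (i p : nat) :=
  union_name (ball_cert ha hb hc (pfst p)) (Nat.min (psnd p)) i.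
Definition ball_union_prefix r N k := tabulate_c ball_union_name k (cpair r N).

Lemma recursive_ball_union_prefix : recursive3 ball_union_prefix.
Proof.
  assert (recursive2 (tabulate_c ball_union_name)).
  { apply recursive_tabulate_c. unfold ball_union_name, union_name, ball_cert. recursive_auto1. }
  unfold ball_union_prefix. recursive_auto1.
Qed.

Lemma ball_union_prefix_spec r N k :
  ball_union_prefix r N k = code_list (prefix (union_name (ball_cert ha hb hc r) (Nat.min N)) k).
Proof.
  unfold ball_union_prefix. rewrite tabulate_c_spec. unfold prefix. f_equal.
  apply map_ext. intros a. unfold ball_union_name. rewrite cpair_fst, cpair_snd. auto.
Qed.

(* Decides [subcover_found] for the cover by the balls of radius [2^-r], with the
   parameters [N], [n0], [k] packed into [z]. *)
Definition subcover_test r z :=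
  let N := pfst z in let n0 := pfst (psnd z) in let k := psnd (psnd z) in
  andn (lebn 2 (hF (cpair n0 (ball_union_prefix r N k))))
       (isz (bex (fun k' => sg (hF (cpair n0 (ball_union_prefix r N k')))) k)).

Lemma recursive_subcover_test : recursive2 subcover_test.
Proof.
  pose proof recursive_ball_union_prefix. unfold subcover_test. recursive_auto1.
Qed.

Lemma subcover_test_spec r z : subcover_test r z <> 0 <->
  subcover_found (ball_cert ha hb hc r) hF (pfst z) (pfst (psnd z)) (psnd (psnd z)).
Proof.
  unfold subcover_test, subcover_found. cbv zeta.
  rewrite andn_neq0, lebn_neq0, isz_neq0, bex_eq0, ball_union_prefix_spec.
  apply and_iff_compat_l. split; intros H k' Hk'; specialize (H k' Hk');
    rewrite ball_union_prefix_spec in *; apply sg_eq0; auto.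
Qed.

Lemma subcover_test_exists r : exists z, subcover_test r z <> 0.
Proof.
  destruct (subcover_found_exists (cauchy_rep M) (in_ball M r) (ball_cert ha hb hc r)
    (ball_cert_sound M ha hb hc Happ r) (ball_cert_complete M ha hb hc Happ r) hF HF
    (in_ball_cover M r)) as [N [n0 [k Hs]]].
  exists (cpair N (cpair n0 k)). apply subcover_test_spec.
  rewrite ?cpair_fst, ?cpair_snd, ?cpair_fst, ?cpair_snd. auto.
Qed.

Definition net_size r := pfst (least (fun z => subcover_test r z <> 0)).

Lemma recursive_net_size : recursive1 net_size.
Proof.
  assert (Hleast : recursive1 (fun r => least (fun z => subcover_test r z <> 0))).
  { apply (recursive1_mu (fun z r => isz (subcover_test r z))).
    - pose proof recursive_subcover_test. recursive_arith1.
    - intros r. destruct (least_spec _ (subcover_test_exists r)) as [H1 H2]. split.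
      + apply isz_eq0. auto.
      + intros y Hy. apply isz_neq0. specialize (H2 y Hy). lia. }
  exact (recursive_app1 1 pfst _ recursive_pfst Hleast).
Qed.
#[local] Hint Resolve recursive_net_size : recursive.

Lemma net_size_covers r (x : cauchy_rep M) : exists i, i < net_size r /\ in_ball M r i x.
Proof.
  destruct (least_spec _ (subcover_test_exists r)) as [H _].
  apply subcover_test_spec in H.
  exact (subcover_found_covers _ _ _ (ball_cert_sound M ha hb hc Happ r)
    (ball_cert_complete M ha hb hc Happ r) hF HF _ _ _ H x).
Qed.

Definition query (p : nat -> nat) m i k (w : list nat) :=
  p (cpair (cpair m i) (code_list (firstn k w))).

(* Every answer of [p] at an index [cpair m i], [i >= j], that is determined by a
   prefix of [w] equals [S c]. *)
Definition stable_answers p m c j (w : list nat) : Prop :=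
  forall i k, j <= i -> i < length w -> k <= length w -> query p m i k w <> 0 ->
    (forall k', k' < k -> query p m i k' w = 0) -> query p m i k w = S c.

(* [w l] indexes the net of radius [2^-(l+2)], and consecutive entries are close. *)
Definition good_path p m c j (w : list nat) : Prop :=
  (forall l, l < length w -> nth l w 0 < net_size (l + 2)) /\
  (forall l, S l < length w -> close_cert ha hb hc (nth l w 0) (nth (S l) w 0) l = true) /\
  stable_answers p m c j w.

Lemma good_path_firstn p m c j w L : good_path p m c j w -> good_path p m c j (firstn L w).
Proof.
  unfold good_path, stable_answers, query. intros [H1 [H2 H3]]. rewrite length_firstn.
  split; [|split].
  - intros l Hl. rewrite nth_firstn. destruct (Nat.ltb_spec l L); [|lia]. apply H1; lia.
  - intros l Hl. rewrite !nth_firstn.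
    destruct (Nat.ltb_spec l L); [|lia]. destruct (Nat.ltb_spec (S l) L); [|lia]. apply H2; lia.
  - intros i k Hji Hi Hk HP Hmin. rewrite firstn_firstn, Nat.min_l in * by lia.
    apply H3; auto; try lia. intros k' Hk'. specialize (Hmin k' Hk').
    rewrite firstn_firstn, Nat.min_l in Hmin by lia. auto.
Qed.

(* The same notions on codes, where [cw] codes [w] and [pc] a prefix of [p]. *)

Definition query_c m i k cw pc := nth_c (cpair (cpair m i) (take_c k cw)) pc.
Definition unstable_c m c j L cw pc :=
  bex (fun i => andn (lebn j i)
     (bex (fun k => andn (andn (sg (query_c m i k cw pc))
                               (isz (bex (fun k' => sg (query_c m i k' cw pc)) k)))
                         (isz (eqbn (query_c m i k cw pc) (S c)))) (S L))) L.
Definition in_nets_c L cw := isz (bex (fun l => isz (ltbn (nth_c l cw) (net_size (l + 2)))) L).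
Definition close_chain_c L cw :=
  isz (bex (fun l => isz (b2n (close_cert ha hb hc (nth_c l cw) (nth_c (S l) cw) l))) (L - 1)).
Definition good_path_c m c j L cw pc :=
  andn (eqbn (len_c cw) L)
    (andn (in_nets_c L cw) (andn (close_chain_c L cw) (isz (unstable_c m c j L cw pc)))).

Section GoodPathCode.
Variables (p : nat -> nat) (m c j : nat) (w : list nat) (pc : nat).
Hypothesis Hpc : forall idx, idx <= cpair (cpair m (length w)) (code_list w) -> nth_c idx pc = p idx.

Lemma query_c_code i k : i <= length w -> query_c m i k (code_list w) pc = query p m i k w.
Proof.
  intros. unfold query_c, query. rewrite take_c_code. apply Hpc.
  apply cpair_mono; [apply cpair_mono; lia|apply code_list_firstn_le].
Qed.

Lemma unstable_c_eq0 : unstable_c m c j (length w) (code_list w) pc = 0 <-> stable_answers p m c j w.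
Proof.
  unfold unstable_c, stable_answers. rewrite bex_eq0. split.
  - intros H i k Hji Hi Hk HP Hmin. specialize (H i Hi). apply andn_eq0 in H.
    destruct H as [H|H]; [apply lebn_neq0 in Hji; lia|].
    rewrite bex_eq0 in H. specialize (H k ltac:(lia)). rewrite query_c_code in H by lia.
    apply andn_eq0 in H. destruct H as [H|H].
    + apply andn_eq0 in H. destruct H as [H|H]; [rewrite sg_eq0 in H; lia|].
      apply isz_eq0 in H. exfalso. apply H. apply bex_eq0. intros k' Hk'.
      rewrite query_c_code by lia. rewrite Hmin; auto.
    + apply isz_eq0 in H. apply eqbn_neq0 in H. auto.
  - intros H i Hi. apply andn_eq0. destruct (Nat.le_gt_cases j i) as [Hji|Hji].
    + right. apply bex_eq0. intros k Hk. rewrite query_c_code by lia. apply andn_eq0.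
      destruct (Nat.eq_dec (query p m i k w) 0) as [Hz|Hnz].
      * left. apply andn_eq0. left. rewrite Hz. reflexivity.
      * destruct (classic (forall k', k' < k -> query p m i k' w = 0)) as [Hm|Hm].
        -- right. apply isz_eq0, eqbn_neq0. apply H; auto; lia.
        -- left. apply andn_eq0. right. apply isz_eq0. intros Hb. apply Hm. intros k' Hk'.
           rewrite bex_eq0 in Hb. specialize (Hb k' Hk').
           rewrite query_c_code, sg_eq0 in Hb by lia. auto.
    + left. unfold lebn. destruct (Nat.leb_spec j i); [lia|auto].
Qed.

Lemma good_path_c_spec :
  good_path_c m c j (length w) (code_list w) pc <> 0 <-> good_path p m c j w.
Proof.
  unfold good_path_c, good_path.
  rewrite !andn_neq0, eqbn_neq0, len_c_code, isz_neq0, unstable_c_eq0.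
  unfold in_nets_c, close_chain_c. rewrite !isz_neq0, !bex_eq0.
  split.
  - intros [_ [H1 [H2 H3]]]. split; [|split; auto].
    + intros l Hl. specialize (H1 l Hl). apply isz_eq0, ltbn_neq0 in H1.
      rewrite nth_c_code in H1. auto.
    + intros l Hl. specialize (H2 l ltac:(lia)). apply isz_eq0, b2n_neq0 in H2.
      rewrite !nth_c_code in H2. auto.
  - intros [H1 [H2 H3]]. split; auto. split; [|split; auto].
    + intros l Hl. apply isz_eq0, ltbn_neq0. rewrite nth_c_code. auto.
    + intros l Hl. apply isz_eq0, b2n_neq0. rewrite !nth_c_code. apply H2. lia.
Qed.
End GoodPathCode.

Definition net_bound L := bsum (fun l => net_size (l + 2)) L.

(* At index [n = cpair (cpair m (cpair c j)) L]: is [c <> 0], and is there a good path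
   of length [L]?  Such paths have codes at most [repeat_c L (net_bound L)], and only
   the first [query_bound n] values of [p] matter. *)
Definition good_path_test n pc :=
  let t := pfst n in let L := psnd n in
  andn (pfst (psnd t))
   (bex (fun cw => good_path_c (pfst t) (pfst (psnd t)) (psnd (psnd t)) L cw pc)
        (S (repeat_c L (net_bound L)))).
Definition query_bound n :=
  S (cpair (cpair (pfst (pfst n)) (psnd n)) (repeat_c (psnd n) (net_bound (psnd n)))).
Definition nonempty_name z :=
  ite (eqbn (len_c (psnd z)) (query_bound (pfst z))) (S (good_path_test (pfst z) (psnd z))) 0.

Lemma recursive_nonempty_name : recursive1 nonempty_name.
Proof.
  unfold nonempty_name, query_bound, good_path_test, net_bound, good_path_c, close_chain_c,
    in_nets_c, unstable_c, query_c, close_cert.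
  recursive_auto1.
Qed.

Lemma good_path_test_spec p n :
  good_path_test n (code_list (prefix p (query_bound n))) <> 0 <->
  pfst (psnd (pfst n)) <> 0 /\ exists w, length w = psnd n /\
    good_path p (pfst (pfst n)) (pfst (psnd (pfst n))) (psnd (psnd (pfst n))) w.
Proof.
  set (m := pfst (pfst n)). set (c := pfst (psnd (pfst n))).
  set (j := psnd (psnd (pfst n))). set (L := psnd n).
  assert (Hpc : forall w, length w = L -> code_list w <= repeat_c L (net_bound L) ->
     forall idx, idx <= cpair (cpair m (length w)) (code_list w) ->
       nth_c idx (code_list (prefix p (query_bound n))) = p idx).
  { intros w Hl Hb idx Hidx. rewrite nth_c_code, prefix_nth; auto.
    unfold query_bound. fold m L. apply Nat.lt_succ_r. eapply Nat.le_trans; [exact Hidx|].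
    rewrite Hl. apply cpair_mono; auto. }
  unfold good_path_test. fold m c j L. rewrite andn_neq0. apply and_iff_compat_l. split.
  - intros Hb. apply bex_spec in Hb. destruct Hb as [cw [Hcw Hg]].
    destruct (code_list_surj cw) as [w <-].
    assert (Hl : length w = L).
    { apply andn_neq0 in Hg. destruct Hg as [Hg _]. apply eqbn_neq0 in Hg.
      rewrite len_c_code in Hg. auto. }
    exists w. split; auto. rewrite <- Hl in Hg.
    apply (good_path_c_spec p m c j w) in Hg; auto. apply Hpc; auto. lia.
  - intros [w [Hl Hg]].
    assert (Hb : code_list w <= repeat_c L (net_bound L)).
    { rewrite <- Hl. apply code_list_le_repeat_c. intros x Hx.
      apply In_nth with (d := 0) in Hx. destruct Hx as [l [Hl' <-]].
      destruct Hg as [He _]. specialize (He l Hl').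
      pose proof (bsum_ge (fun l => net_size (l + 2)) L l ltac:(lia)).
      unfold net_bound. rewrite Hl. lia. }
    apply bex_spec. exists (code_list w). split; [lia|].
    rewrite <- Hl. apply (good_path_c_spec p m c j w); auto. apply Hpc; auto.
Qed.

Definition deep_good_paths p t :=
  pfst (psnd t) <> 0 /\
  forall L, exists w, length w = L /\ good_path p (pfst t) (pfst (psnd t)) (psnd (psnd t)) w.

Section Equivalence.
Variable U : Ospace' (cauchy_rep M).
Variable p : nat -> nat.
Hypothesis Hp : realizes p (proj1_sig U).

(* The path through the nets along a point of [U] is good for the data [m, c, j] at
   which the name of [U] stabilises to [c <> 0] on that point. *)
Lemma deep_good_paths_of_point : (exists x, proj1_sig U x = true) -> exists t, deep_good_paths p t.
Proof.
  intros [x Hx].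
  destruct (choice _ (fun l => net_size_covers (l + 2) x)) as [q Hq].
  assert (Hname : delta (cauchy_rep M) q x).
  { intros n. destruct (Hq n) as [_ H]. unfold in_ball in H.
    pose proof (inv_pow2_le n (n + 2) ltac:(lia)). lra. }
  destruct (Hp q x Hname) as [s [Hs [r [Hlim HU]]]].
  apply HU in Hx. destruct Hx as [m Hm]. destruct (Hlim m) as [j Hj].
  exists (cpair m (cpair (r m) j)). unfold deep_good_paths.
  rewrite ?cpair_fst, ?cpair_snd, ?cpair_fst, ?cpair_snd. split; auto.
  intros L. exists (prefix q L). split; [apply prefix_length|].
  unfold good_path, stable_answers, query. rewrite prefix_length. split; [|split].
  - intros l Hl. rewrite prefix_nth by auto. apply Hq.
  - intros l Hl. rewrite !prefix_nth by lia.
    apply (close_cert_of_balls M ha hb hc Happ _ _ x); apply Hq.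
  - intros i k Hji Hi Hk HP Hmin. rewrite firstn_prefix in * by lia.
    destruct (p (cpair (cpair m i) (code_list (prefix q k)))) as [|v] eqn:E; [lia|].
    f_equal. rewrite <- (assoc_unique p q s _ k v Hs E); [apply Hj; auto|].
    intros k' Hk'. specialize (Hmin k' Hk'). rewrite firstn_prefix in Hmin by lia. auto.
Qed.

(* König's lemma gives an infinite good path, a fast Cauchy sequence whose limit has
   the stabilisation data [m, c, j], so lies in [U]. *)
Lemma point_of_deep_good_paths : (exists t, deep_good_paths p t) -> exists x, proj1_sig U x = true.
Proof.
  intros [t [Hc Hall]].
  set (m := pfst t) in *. set (c := pfst (psnd t)) in *. set (j := psnd (psnd t)) in *.
  destruct (koenig (good_path p m c j) (fun l => net_size (l + 2))
     (fun w k H => good_path_firstn p m c j w k H) (fun w l H Hl => proj1 H l Hl) Hall)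
    as [q Hq].
  assert (Hcauchy : forall n, (cm_dist M (d (q n)) (d (q (S n))) <= / 2 ^ S n)%R).
  { intros n. apply (close_cert_sound M ha hb hc Happ). destruct (Hq (S (S n))) as [_ [H _]].
    specialize (H n). rewrite prefix_length, !prefix_nth in H by lia. apply H. lia. }
  destruct (fast_cauchy_limit M ha hb hc Happ hF HF q Hcauchy) as [x Hx].
  exists x. destruct (Hp q x Hx) as [s [Hs [r [Hlim HU]]]]. apply HU. exists m.
  rewrite (is_lim_unique s r m Hlim j c); auto.
  intros i Hji. destruct (Hs (cpair m i)) as [k [Hk1 Hk2]].
  destruct (Hq (S i + k)) as [_ [_ Hst]]. unfold stable_answers, query in Hst.
  rewrite prefix_length in Hst. specialize (Hst i k Hji ltac:(lia) ltac:(lia)).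
  rewrite firstn_prefix, Hk1 in Hst by lia.
  assert (S (s (cpair m i)) = S c); [|lia]. apply Hst; [lia|].
  intros k' Hk'. rewrite firstn_prefix by lia. apply Hk2; auto.
Qed.
End Equivalence.

(* A decidable tree has infinitely many levels iff all its levels are non-empty, a
   [Pi^0_1] property: the tests at levels [L] converge to its truth value. *)
Lemma good_path_test_lim p : is_lim
  (fun n => good_path_test n (code_list (prefix p (query_bound n))))
  (fun t => b2n (bool_of (deep_good_paths p t))).
Proof.
  intros t.
  set (g i := good_path_test (cpair t i) (code_list (prefix p (query_bound (cpair t i))))).
  assert (Hg : forall i, g i <> 0 <-> pfst (psnd t) <> 0 /\ exists w, length w = i /\
             good_path p (pfst t) (pfst (psnd t)) (psnd (psnd t)) w).
  { intros i. unfold g. rewrite good_path_test_spec, cpair_fst, cpair_snd. reflexivity. }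
  change (exists i0, forall i, i0 <= i -> g i = b2n (bool_of (deep_good_paths p t))).
  destruct (classic (deep_good_paths p t)) as [HQ|HQ].
  - exists 0. intros i _. rewrite (proj2 (bool_of_true _) HQ).
    assert (g i <> 0) by (apply Hg; destruct HQ as [Hc HL]; auto).
    assert (g i <= 1) by apply andn_le1. simpl. lia.
  - assert (Hb : bool_of (deep_good_paths p t) = false)
      by (destruct (bool_of _) eqn:E; auto; rewrite bool_of_true in E; tauto).
    rewrite Hb. cbn [b2n].
    destruct (Nat.eq_dec (pfst (psnd t)) 0) as [Hc|Hc].
    + exists 0. intros i _. destruct (Nat.eq_dec (g i) 0) as [|E]; auto.
      apply Hg in E. tauto.
    + assert (HL : exists L0, ~ exists w, length w = L0 /\
                good_path p (pfst t) (pfst (psnd t)) (psnd (psnd t)) w).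
      { apply NNPP. intros Hn. apply HQ. split; auto. intros L. apply NNPP. intros Hn2.
        apply Hn. eauto. }
      destruct HL as [L0 HL0]. exists L0. intros i Hi.
      destruct (Nat.eq_dec (g i) 0) as [|E]; auto.
      apply Hg in E. destruct E as [_ [w [Hw Hgood]]]. exfalso. apply HL0.
      exists (firstn L0 w). split; [rewrite length_firstn; lia|]. apply good_path_firstn; auto.
Qed.

Lemma nonempty_name_assoc p :
  assoc nonempty_name p (fun n => good_path_test n (code_list (prefix p (query_bound n)))).
Proof.
  intros n. exists (query_bound n). unfold nonempty_name, eqbn.
  rewrite cpair_fst, cpair_snd, len_c_code, prefix_length, Nat.eqb_refl. split; [reflexivity|].
  intros k Hk. rewrite cpair_fst, cpair_snd, len_c_code, prefix_length.
  destruct (Nat.eqb_spec k (query_bound n)); [lia|reflexivity].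
Qed.

Lemma nonempty_name_realizes : realizes nonempty_name (IsNonEmpty' (cauchy_rep M)).
Proof.
  intros p U Hp. eexists. split; [apply nonempty_name_assoc|].
  exists (fun t => b2n (bool_of (deep_good_paths p t))). split; [apply good_path_test_lim|].
  cbn [delta Sierp]. unfold IsNonEmpty'. rewrite bool_of_true. split.
  - intros Hx. destruct (deep_good_paths_of_point U p Hp Hx) as [t Ht].
    exists t. rewrite (proj2 (bool_of_true _) Ht). discriminate.
  - intros [t Ht]. apply (point_of_deep_good_paths U p Hp). exists t.
    destruct (bool_of (deep_good_paths p t)) eqn:E; [|contradiction].
    apply bool_of_true. exact E.
Qed.
End Realizer.

Theorem lemma37 (M : cmetric_space) :
  computably_compact (cauchy_rep M) -> prime_overt (cauchy_rep M).
Proof.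
  intros [hF [[eF HeF] HF]].
  destruct (cm_dist_computable M) as [ha [hb [hc [[ea Hea] [[eb Heb] [[ec Hec] Happ]]]]]].
  assert (to_recursive1 : forall e (h : nat -> nat), (forall n, ev e [n] (h n)) -> recursive1 h)
    by (intros e h He; exists e; intros [|x [|]] Hl; try discriminate; apply He).
  exists (nonempty_name ha hb hc hF). split.
  - destruct (recursive_nonempty_name M ha hb hc hF (to_recursive1 _ _ Hea) (to_recursive1 _ _ Heb)
      (to_recursive1 _ _ Hec) (to_recursive1 _ _ HeF) Happ HF) as [e He].
    exists e. intros n. exact (He [n] eq_refl).
  - exact (nonempty_name_realizes M ha hb hc hF Happ HF).
Qed.
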